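(* Assume $abcd\neq0$. For $n\in\{0,1,\dots,M-1\}$, with $\|\vec\varphi(n)\|^2=|\varphi(n;R)|^2+|\varphi(n;L)|^2$, \[\|\vec\varphi(n)\|^2=\begin{cases}\dfrac{|a|^2+|b|^2{\zeta'_{M-n-1}}^2+|b|^2{\zeta'_{M-n}}^2}{|a|^2+|b|^2{\zeta'_M}^2}, & \omega\notin\partial B,\\[3mm] \dfrac{|a|^2+|b|^2(M-n)^2+|b|^2(M-n-1)^2}{|a|^2+M^2|b|^2}, & \omega\in\partial B.\end{cases}\]
   Context: Setting: $M\ge1$, $C=\begin{bmatrix} a&b\\ c&d\end{bmatrix}$ a $2\times2$ unitary matrix, $\Delta=\det C$; $|L\rangle=(1,0)^\top$, $|R\rangle=(0,1)^\top$; $\Gamma_M=\{0,\dots,M-1\}$. $E_M$ is the linear map on $\ell^2(\Gamma_M;\mathbb{C}^2)$ with $(E_M\varphi)(x)=P\varphi(x+1)+Q\varphi(x-1)$, $\varphi(-1)=\varphi(M)=0$, $P=\begin{bmatrix} a&b\\0&0\end{bmatrix}$, $Q=\begin{bmatrix}0&0\\c&d\end{bmatrix}$. For $\xi\in\mathbb{R}$, $z=e^{-i\xi}$, let $\varphi$ be the unique solution of $(z-E_M)\varphi=\delta_0|R\rangle$, $\varphi(x;L)=\langle L|\varphi(x)\rangle$, $\varphi(x;R)=\langle R|\varphi(x)\rangle$. Fix a square root $\Delta^{1/2}$, set $\omega=\Delta^{-1/2}z$ (on the unit circle), $x(\omega)=\frac{\omega+\omega^{-1}}{2|a|}$, $\zeta'_m=U_{m-1}(x(\omega))$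 with $U_m$ the Chebyshev polynomials of the second kind ($U_{-1}=0$, $U_0=1$, $U_{m+1}(t)=2tU_m(t)-U_{m-1}(t)$), and $\partial B=\{\omega:|x(\omega)|=1\}$. *)

From HB Require Import structures.
From mathcomp Require Import all_boot all_order all_algebra.
From mathcomp Require Import complex.
From mathcomp Require Import reals trigo.
Set Implicit Arguments. Unset Strict Implicit. Unset Printing Implicit Defensive.
Import Order.TTheory GRing.Theory Num.Theory.
Local Open Scope ring_scope.
Local Open Scope complex_scope.

Section Defs.
Variable R : realType.
Local Notation C := R[i].

Definition adjmx (A : 'M[C]_2) : 'M[C]_2 := (map_mx Num.conj A)^T.
Definition unitary2 (A : 'M[C]_2) : Prop := A *m adjmx A = 1%:M.

Definition ent_a (A : 'M[C]_2) : C := A 0 0.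
Definition ent_b (A : 'M[C]_2) : C := A 0 1.
Definition ent_c (A : 'M[C]_2) : C := A 1 0.
Definition ent_d (A : 'M[C]_2) : C := A 1 1.

Definition Pmx (A : 'M[C]_2) : 'M[C]_2 :=
  \matrix_(i < 2, j < 2) (if i == 0 then A i j else 0).
Definition Qmx (A : 'M[C]_2) : 'M[C]_2 :=
  \matrix_(i < 2, j < 2) (if i == 1 then A i j else 0).

Definition ketL : 'cV[C]_2 := \col_(i < 2) (if i == 0 then 1 else 0).
Definition ketR : 'cV[C]_2 := \col_(i < 2) (if i == 1 then 1 else 0).

(* extension by zero of phi : 'I_M -> C^2 to nat (so phi(M) = 0) *)
Definition extz (M : nat) (phi : 'I_M -> 'cV[C]_2) (x : nat) : 'cV[C]_2 :=
  match ltnP x M with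
  | LtnNotGeq h => phi (Ordinal h)
  | _ => 0
  end.

Definition E_M (A : 'M[C]_2) (M : nat) (phi : 'I_M -> 'cV[C]_2)
  (x : 'I_M) : 'cV[C]_2 :=
  Pmx A *m extz phi x.+1 +
  Qmx A *m (if x == 0%N :> nat then 0 else extz phi x.-1).

Definition delta0R (M : nat) (x : 'I_M) : 'cV[C]_2 :=
  if x == 0%N :> nat then ketR else 0.

Definition solves (A : 'M[C]_2) (M : nat) (z : C)
  (phi : 'I_M -> 'cV[C]_2) : Prop :=
  forall x : 'I_M, z *: phi x - E_M A phi x = delta0R x.

Definition expmi (xi : R) : C := (cos xi) +i* (- sin xi).

Fixpoint chebU (m : nat) (t : C) : C :=
  match m with
  | 0 => 1
  | 1 => 2 * t
  | (m'.+1 as k).+1 => 2 * t * chebU k t - chebU m' t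
  end.

(* zeta'_m = U_{m-1}(t), with U_{-1} = 0 *)
Definition zetap (m : nat) (t : C) : C :=
  if m is m'.+1 then chebU m' t else 0.

Definition xom (a omega : C) : C := (omega + omega^-1) / (2 * `|a|).

Definition sqnorm (v : 'cV[C]_2) : C := `|v 1 0| ^+ 2 + `|v 0 0| ^+ 2.

End Defs.

From HB Require Import structures.
From mathcomp Require Import all_boot all_order all_algebra.
From mathcomp Require Import complex.
From mathcomp Require Import reals trigo.
From mathcomp Require Import ring.
Import Order.TTheory GRing.Theory Num.Theory.
Local Open Scope ring_scope.
Set Implicit Arguments. Unset Strict Implicit.

(* Unitarity forces  (c, d) = Delta (- conj b, conj a)  with |Delta| = 1
   (unitary2_row1).  Writing  s^2 = Delta  and  z = s w, the eigen-equation is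
   a first-order recursion in the site which, z and d being invertible, can be
   run from the right end, where phi(M) = 0 forces phi(M-1; L) = 0.  Its
   normalised solution is explicit in terms of the Chebyshev values
   zeta'_k = U_(k-1)(t) of the real argument  t = (w + 1/w) / (2|a|)
   (psiL, psiR), and uniqueness for the backward recursion (backward_unique)
   makes phi a multiple r of it (walk_profile).  The Cassini identity for the
   Chebyshev recurrence computes the moduli of psiL and psiR, and the source at
   x = 0 fixes |r|^2; this gives the general formula sqnorm_closed_form.  The
   theorem is its instance w = omega; on the boundary |t| = 1 of B the real
   number t is +-1, where zeta'_k^2 = k^2. *)

Section UnitaryCoin.
Variable R : realType.
Local Notation C := R[i].
Implicit Types A : 'M[C]_2.

(* The index 1 of 'I_2, as produced by expanding sums over 'I_2. *)
Lemma lift0_ord1 : lift ord0 (ord0 : 'I_1) = 1 :> 'I_2.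
Proof. exact: val_inj. Qed.

Lemma unitary2_rows A i j : unitary2 A ->
  A i 0 * (A j 0)^* + A i 1 * (A j 1)^* = (i == j)%:R.
Proof.
move=> /(congr1 (fun B : 'M[C]_2 => B i j)).
by rewrite !mxE !big_ord_recl big_ord0 addr0 /= !mxE lift0_ord1.
Qed.

Lemma det_mx2 A : \det A = A 0 0 * A 1 1 - A 0 1 * A 1 0.
Proof.
rewrite (expand_det_row _ 0) !big_ord_recl big_ord0 /cofactor /=.
rewrite !det_mx11 !mxE /= lift0_ord1.
have -> : lift 1 (ord0 : 'I_1) = 0 :> 'I_2 by exact: val_inj.
by rewrite /= expr0 expr1 !mul1r addr0 mulN1r mulrN.
Qed.

Lemma unitary2_row0_norm A : unitary2 A -> `|A 0 0| ^+ 2 + `|A 0 1| ^+ 2 = 1.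
Proof. by move=> hU; rewrite !normCK (unitary2_rows 0 0 hU). Qed.

Lemma unitary2_row1 A : unitary2 A ->
  [/\ A 1 1 = \det A * (A 0 0)^* , A 1 0 = - (\det A * (A 0 1)^*)
    & `|\det A| = 1].
Proof.
move=> hU; rewrite det_mx2.
have R00 := unitary2_rows 0 0 hU; have R11 := unitary2_rows 1 1 hU.
have R01 : (A 0 0)^* * A 1 0 + (A 0 1)^* * A 1 1 = 0.
  have := congr1 Num.conj (unitary2_rows 0 1 hU).
  by rewrite rmorphD !rmorphM /= !conjCK rmorph0.
move: R00 R11 R01 => /=; set a := A 0 0; set b := A 0 1.
set c := A 1 0; set d := A 1 1; set D := a * d - b * c => R00 R11 R01.
have hd : d = D * a^*.
  apply/eqP; rewrite eq_sym -subr_eq0; apply/eqP.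
  transitivity (d * (a * a^* + b * b^* - 1) - b * (a^* * c + b^* * d)).
    by rewrite /D; ring.
  by rewrite R00 R01 subrr !mulr0 subr0.
have hc : c = - (D * b^*).
  apply/eqP; rewrite -subr_eq0 opprK; apply/eqP.
  transitivity (c * (1 - (a * a^* + b * b^*)) + a * (a^* * c + b^* * d)).
    by rewrite /D; ring.
  by rewrite R00 R01 subrr !mulr0 addr0.
have hDD : `|D| ^+ 2 = 1.
  have : c * c^* + d * d^* = D * D^* * (a * a^* + b * b^*).
    by rewrite hd hc rmorphN !rmorphM /= !conjCK; ring.
  by rewrite R11 R00 mulr1 -normCK => <-.
by split=> //; apply/eqP; rewrite -(sqrp_eq1 (normr_ge0 D)) hDD.
Qed.

End UnitaryCoin.

Section Chebyshev.
Variable R : realType.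
Local Notation C := R[i].
Variable t : C.

Lemma zetapSS k : zetap k.+2 t = 2 * t * zetap k.+1 t - zetap k t.
Proof. by case: k => [|k] //=; rewrite mulr1 subr0. Qed.

Lemma zetap_cassini k :
  zetap k.+1 t ^+ 2 - 2 * t * zetap k.+1 t * zetap k t + zetap k t ^+ 2 = 1.
Proof.
elim: k => [|k IH]; first by rewrite /= expr1n mulr0 subr0 expr0n addr0.
rewrite zetapSS -[RHS]IH; move: (zetap k.+1 t) (zetap k t) => Z1 Z0; ring.
Qed.

Lemma zetap_real k : t^* = t -> (zetap k t)^* = zetap k t.
Proof.
move=> ht.
suff [] : (zetap k t)^* = zetap k t /\ (zetap k.+1 t)^* = zetap k.+1 t by [].
elim: k => [|k [IH0 IH1]]; first by rewrite /= rmorph0 rmorph1.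
by split=> //; rewrite zetapSS rmorphB !rmorphM /= ht IH0 IH1 rmorph_nat.
Qed.

Lemma zetap_unit k : t ^+ 2 = 1 -> zetap k t = t ^+ k.+1 * k%:R.
Proof.
move=> ht.
suff [] : zetap k t = t ^+ k.+1 * k%:R /\ zetap k.+1 t = t ^+ k.+2 * k.+1%:R.
  by [].
elim: k => [|k [IH0 IH1]]; first by rewrite /= mulr0 mulr1 ht.
split=> //; rewrite zetapSS IH0 IH1; apply/eqP; rewrite -subr_eq0; apply/eqP.
transitivity (t ^+ k.+1 * k%:R * (t ^+ 2 - 1)); first by rewrite !exprS !mulrS; ring.
by rewrite ht subrr mulr0.
Qed.

Lemma zetap_unit_sq k : t ^+ 2 = 1 -> zetap k t ^+ 2 = k%:R ^+ 2.
Proof.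
by move=> ht; rewrite zetap_unit // exprMn -exprM mulnC exprM ht expr1n mul1r.
Qed.

End Chebyshev.

Section ClosedFormSolution.
Variable R : realType.
Local Notation C := R[i].
Variables (a b s w : C).
Hypotheses (a0 : a != 0) (b0 : b != 0) (ns : `|s| = 1) (nw : `|w| = 1).
Hypothesis nab : `|a| ^+ 2 + `|b| ^+ 2 = 1.
Local Notation t := (xom a w).

(* Candidate amplitudes, indexed by the distance k to the right end of the
   segment; rho is a unimodular phase. *)
Definition rho : C := a / (`|a| * s).
Definition psiL (k : nat) : C := rho ^+ k * zetap k t * b * `|a| / (a * w).
Definition psiR (k : nat) : C :=
  rho ^+ k * (zetap k.+1 t - `|a| / w * zetap k t).

Let na0 : `|a| != 0. Proof. by rewrite normr_eq0. Qed.
Let s0 : s != 0. Proof. by rewrite -normr_eq0 ns oner_eq0. Qed.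
Let w0 : w != 0. Proof. by rewrite -normr_eq0 nw oner_eq0. Qed.
Let conj_w : w^* = w^-1.
Proof. by rewrite (invC_norm w) nw expr1n invr1 mul1r. Qed.

Lemma psiL0 : psiL 0 = 0.
Proof. by rewrite /psiL /= mulr0 !mul0r. Qed.

Lemma psiR0 : psiR 0 = 1.
Proof. by rewrite /psiR /= mulr0 subr0 mul1r. Qed.

(* Left component of the eigen-equation, read from right to left. *)
Lemma psiL_step k : s * w * psiL k.+1 = a * psiL k + b * psiR k.
Proof.
rewrite /psiL /psiR [rho ^+ k.+1]exprS.
move: (rho ^+ k) (zetap k t) (zetap k.+1 t) => P Z0 Z1.
by rewrite /rho; field; rewrite ?a0 ?na0 ?s0 ?w0.
Qed.

(* Right component, with the second row (c, d) = s^2 (- conj b, conj a). *)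
Lemma psiR_step k :
  s ^+ 2 * a^* * psiR k.+1 = s * w * psiR k + s ^+ 2 * b^* * psiL k.+1.
Proof.
have conj_a : a^* = `|a| ^+ 2 / a by rewrite normCK [a * _]mulrC mulfK.
have conj_b : b^* = (1 - `|a| ^+ 2) / b.
  by rewrite -nab addrAC subrr add0r normCK [b * _]mulrC mulfK.
have two0 : (2 : C) != 0 by rewrite pnatr_eq0.
rewrite /psiL /psiR [rho ^+ k.+1]exprS zetapSS conj_a conj_b.
move: (rho ^+ k) (zetap k t) (zetap k.+1 t) => P Z0 Z1.
by rewrite /rho /xom; field; rewrite ?a0 ?b0 ?na0 ?s0 ?w0 ?two0.
Qed.

Lemma xom_real : t^* = t.
Proof.
rewrite /xom rmorphM fmorphV rmorphD fmorphV /= conj_w invrK rmorphM /=.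
by rewrite conj_normC rmorph_nat addrC.
Qed.

Let norm_rho : `|rho| = 1.
Proof. by rewrite /rho normrM normfV normrM normr_id ns mulr1 divff. Qed.

(* Squared moduli of the amplitudes, via the Cassini identity. *)
Lemma norm_psiR k : `|psiR k| ^+ 2 = `|a| ^+ 2 + `|b| ^+ 2 * zetap k.+1 t ^+ 2.
Proof.
rewrite /psiR normrM normrX norm_rho expr1n mul1r normCK.
rewrite rmorphB !rmorphM fmorphV /= conj_w invrK conj_normC.
rewrite -[chebU k t]/(zetap k.+1 t) !zetap_real ?xom_real //.
have nb : `|b| ^+ 2 = 1 - `|a| ^+ 2 by rewrite -nab addrAC subrr add0r.
have := zetap_cassini t k; rewrite nb /xom.
move: (zetap k t) (zetap k.+1 t) => Z0 Z1 cas.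
have two0 : (2 : C) != 0 by rewrite pnatr_eq0.
apply/eqP; rewrite -subr_eq0; apply/eqP.
transitivity (`|a| ^+ 2 * ((Z1 ^+ 2 - 2 * ((w + w^-1) / (2 * `|a|)) * Z1 * Z0
                            + Z0 ^+ 2) - 1)).
  by field; rewrite ?w0 ?na0 ?two0.
by rewrite cas subrr mulr0.
Qed.

Lemma norm_psiL k : `|psiL k| ^+ 2 = `|b| ^+ 2 * zetap k t ^+ 2.
Proof.
rewrite /psiL !normrM normfV normrM normrX norm_rho expr1n mul1r normr_id nw.
rewrite mulr1 mulfK // exprMn mulrC; congr (_ * _).
by rewrite normCK zetap_real ?xom_real // expr2.
Qed.

End ClosedFormSolution.

Section BackwardRecursion.
Variable R : realType.
Local Notation C := R[i].
Variables (a b c d z : C) (M : nat) (fL fR gL gR : nat -> C).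
Hypotheses (z0 : z != 0) (d0 : d != 0).

Hypothesis fL_eq :
  forall x, (x < M)%N -> z * fL x = a * fL x.+1 + b * fR x.+1.
Hypothesis fR_eq :
  forall x, (0 < x < M)%N -> z * fR x = c * fL x.-1 + d * fR x.-1.
Hypotheses (fLM : fL M = 0) (fRM : fR M = 0).

Hypotheses (gL0 : gL 0 = 0) (gR0 : gR 0 = 1).
Hypothesis gL_step : forall k, z * gL k.+1 = a * gL k + b * gR k.
Hypothesis gR_step : forall k, d * gR k.+1 = z * gR k - c * gL k.+1.

(* Since z and d are invertible, the recursion can be run from right to left:
   the solution is the multiple  fR (M - 1)  of the normalised one. *)
Lemma backward_unique k : (k < M)%N ->
  fL (M.-1 - k) = fR M.-1 * gL k /\ fR (M.-1 - k) = fR M.-1 * gR k.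
Proof.
elim: k => [|k IH] hk.
  rewrite subn0 gL0 gR0 mulr0 mulr1; split=> //.
  apply: (mulfI z0).
  by rewrite mulr0 fL_eq ?ltn_predL // prednK // fLM fRM !mulr0 addr0.
have [IHL IHR] := IH (ltnW hk).
have M0 : (0 < M)%N by apply: leq_trans hk.
have hkM : (k < M.-1)%N by rewrite -ltnS prednK.
set x := (M.-1 - k.+1)%N.
have hx : x.+1 = (M.-1 - k)%N by rewrite /x subnSK.
have hxM : (x.+1 < M)%N.
  by rewrite hx (leq_ltn_trans (leq_subr _ _)) // ltn_predL.
have hL : fL x = fR M.-1 * gL k.+1.
  apply: (mulfI z0); rewrite fL_eq ?(ltnW hxM) // hx IHL IHR [in RHS]mulrCA.
  by rewrite gL_step; ring.
split=> //; apply: (mulfI d0); rewrite [in RHS]mulrCA gR_step.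
have := fR_eq (x := x.+1) hxM; rewrite /= hx IHR hL => hR.
have -> : d * fR x = z * (fR M.-1 * gR k) - c * (fR M.-1 * gL k.+1).
  by rewrite hR [c * _ + _]addrC addrK.
ring.
Qed.

End BackwardRecursion.

Section Walk.
Variable R : realType.
Local Notation C := R[i].

Lemma extz_ord M (phi : 'I_M -> 'cV[C]_2) (x : 'I_M) : extz phi x = phi x.
Proof.
rewrite /extz; case: ltnP => h; first by congr phi; apply: val_inj.
by move: (ltn_ord x); rewrite ltnNge h.
Qed.

Lemma extz_end M (phi : 'I_M -> 'cV[C]_2) : extz phi M = 0.
Proof. by rewrite /extz; case: ltnP => // h; exfalso; move: h; rewrite ltnn. Qed.

Lemma solves_left A M z (phi : 'I_M -> 'cV[C]_2) x : (x < M)%N ->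
  solves A z phi ->
  z * extz phi x 0 0 = A 0 0 * extz phi x.+1 0 0 + A 0 1 * extz phi x.+1 1 0.
Proof.
move=> hx /(_ (Ordinal hx)) /(congr1 (fun v : 'cV[C]_2 => v 0 0)).
rewrite /E_M /delta0R !mxE !big_ord_recl !big_ord0 !addr0 /= !mxE /= lift0_ord1.
rewrite -(extz_ord phi (Ordinal hx)) /= !mul0r.
have -> : (if x == 0%N then ketR R else 0) 0 0 = 0 by case: (x == 0%N); rewrite !mxE.
by rewrite !addr0 => /eqP; rewrite subr_eq0 => /eqP.
Qed.

Lemma solves_right A M z (phi : 'I_M -> 'cV[C]_2) x : (x < M)%N ->
  solves A z phi ->
  z * extz phi x 1 0 = if x == 0%N then 1
    else A 1 0 * extz phi x.-1 0 0 + A 1 1 * extz phi x.-1 1 0.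
Proof.
move=> hx /(_ (Ordinal hx)) /(congr1 (fun v : 'cV[C]_2 => v 1 0)).
rewrite /E_M /delta0R !mxE !big_ord_recl !big_ord0 !addr0 /= !mxE /= lift0_ord1.
rewrite -(extz_ord phi (Ordinal hx)) /= !mul0r add0r.
case: (x == 0%N); rewrite ?mxE /= ?mulr0 ?addr0 ?subr0 // add0r.
by move=> /eqP; rewrite subr_eq0 => /eqP.
Qed.

End Walk.

Section SquaredNorm.
Variable R : realType.
Local Notation C := R[i].

Lemma unit_sqrt_det (A : 'M[C]_2) (s : C) :
  unitary2 A -> s ^+ 2 = \det A -> `|s| = 1.
Proof.
move=> hU hs; have [_ _ nD] := unitary2_row1 hU.
by apply/eqP; rewrite -(sqrp_eq1 (normr_ge0 s)) -normrX hs nD.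
Qed.

Lemma walk_profile (A : 'M[C]_2) (s w : C) M (phi : 'I_M -> 'cV[C]_2) k :
  unitary2 A -> A 0 0 != 0 -> A 0 1 != 0 -> s ^+ 2 = \det A -> `|w| = 1 ->
  solves A (s * w) phi -> (k < M)%N ->
  extz phi (M.-1 - k) 0 0 = extz phi M.-1 1 0 * psiL (A 0 0) (A 0 1) s w k /\
  extz phi (M.-1 - k) 1 0 = extz phi M.-1 1 0 * psiR (A 0 0) s w k.
Proof.
move=> hU a0 b0 hs nw hsol hk.
have [hd hc nD] := unitary2_row1 hU.
have ns := unit_sqrt_det hU hs.
have nab := unitary2_row0_norm hU.
have z0 : s * w != 0 by rewrite -normr_eq0 normrM ns nw mulr1 oner_eq0.
have d0 : A 1 1 != 0.
  by rewrite hd mulf_neq0 // ?conjC_eq0 // -normr_eq0 nD oner_eq0.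
apply: (backward_unique (c := A 1 0) (fL := fun x => extz phi x 0 0)
  (fR := fun x => extz phi x 1 0) (gL := psiL (A 0 0) (A 0 1) s w)
  (gR := psiR (A 0 0) s w) z0 d0 _ _ _ _ _ _ _ _ hk).
- by move=> x hx; apply: solves_left.
- by case=> // x /andP[_ hx]; rewrite (solves_right hx hsol).
- by rewrite extz_end mxE.
- by rewrite extz_end mxE.
- exact: psiL0.
- exact: psiR0.
- by move=> j; apply: psiL_step.
- by move=> j; rewrite hd hc -hs (psiR_step a0 b0) // mulNr opprK.
Qed.

Lemma sqnorm_closed_form (A : 'M[C]_2) (s w : C) M (phi : 'I_M -> 'cV[C]_2)
    (n : 'I_M) :
  unitary2 A -> A 0 0 != 0 -> A 0 1 != 0 -> s ^+ 2 = \det A -> `|w| = 1 ->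
  solves A (s * w) phi ->
  let a := A 0 0 in let b := A 0 1 in let t := xom a w in
  sqnorm (phi n) =
    (`|a| ^+ 2 + `|b| ^+ 2 * zetap (M - n - 1) t ^+ 2
               + `|b| ^+ 2 * zetap (M - n) t ^+ 2)
    / (`|a| ^+ 2 + `|b| ^+ 2 * zetap M t ^+ 2).
Proof.
move=> hU a0 b0 hs nw hsol; cbv zeta.
have ns := unit_sqrt_det hU hs.
have nab := unitary2_row0_norm hU.
have M0 : (0 < M)%N := leq_ltn_trans (leq0n n) (ltn_ord n).
have last : (M.-1 < M)%N by rewrite ltn_predL.
have profile k := walk_profile (k := k) hU a0 b0 hs nw hsol.
set r := extz phi M.-1 1 0 in profile.
set den := `|A 0 0| ^+ 2 + `|A 0 1| ^+ 2 * zetap M (xom (A 0 0) w) ^+ 2.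
(* the source at x = 0 fixes the modulus of r *)
have hr : `|r| ^+ 2 * den = 1.
  have [_ hR0] := profile M.-1 last; rewrite subnn in hR0.
  have := solves_right (x := 0) M0 hsol; rewrite /= hR0 => /(congr1 (fun x => `|x| ^+ 2)).
  rewrite [`|s * w * _|]normrM [`|s * w|]normrM [`|r * _|]normrM ns nw.
  by rewrite !mul1r normr1 expr1n exprMn (norm_psiR (b := A 0 1)) // prednK.
have den0 : den != 0.
  by apply/eqP => e; move: hr; rewrite e mulr0 => /eqP; rewrite eq_sym oner_eq0.
pose k := (M.-1 - n)%N.
have hnk : nat_of_ord n = (M.-1 - k)%N by rewrite subKn // -ltnS prednK.
have [hL hR] := profile k (leq_ltn_trans (leq_subr _ _) last).
have -> : (M - n - 1 = k)%N by rewrite /k subnAC subn1.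
have -> : (M - n = k.+1)%N by rewrite /k -subSn ?prednK // -ltnS prednK.
rewrite /sqnorm -(extz_ord phi n) hnk hL hR [`|r * psiR _ _ _ _|]normrM.
rewrite [`|r * psiL _ _ _ _ _|]normrM !exprMn (norm_psiR (b := A 0 1)) //.
rewrite norm_psiL // -[`|r| ^+ 2](mulfK den0) hr mul1r.
by field.
Qed.

Lemma norm_expmi (xi : R) : `|expmi xi| = 1 :> C.
Proof. by rewrite /expmi; simpc; rewrite sqrrN cos2Dsin2 sqrtr1. Qed.

End SquaredNorm.

Theorem mainTheorem6 (R : realType) (M : nat) (A : 'M[R[i]]_2)
  (sqrtDelta : R[i]) (xi : R) (phi : 'I_M -> 'cV[R[i]]_2) :
  (1 <= M)%N ->
  unitary2 A ->
  ent_a A * ent_b A * ent_c A * ent_d A != 0 ->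
  sqrtDelta ^+ 2 = \det A ->
  solves A (expmi xi) phi ->
  let a := ent_a A in
  let b := ent_b A in
  let omega := sqrtDelta^-1 * expmi xi in
  let t := xom a omega in
  forall n : 'I_M,
    (`|t| != 1 ->
      sqnorm (phi n) =
        (`|a| ^+ 2 + `|b| ^+ 2 * (zetap (M - n - 1) t) ^+ 2
                   + `|b| ^+ 2 * (zetap (M - n) t) ^+ 2)
        / (`|a| ^+ 2 + `|b| ^+ 2 * (zetap M t) ^+ 2)) /\
    (`|t| = 1 ->
      sqnorm (phi n) =
        (`|a| ^+ 2 + `|b| ^+ 2 * ((M - n)%:R) ^+ 2
                   + `|b| ^+ 2 * ((M - n - 1)%:R) ^+ 2)
        / (`|a| ^+ 2 + (M%:R) ^+ 2 * `|b| ^+ 2)).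
Proof.
move=> _ hU hnz hs hsol a b omega t n.
move: hnz; rewrite !mulf_eq0 !negb_or => /andP[/andP[/andP[a0 b0] _] _].
have ns := unit_sqrt_det hU hs.
have s0 : sqrtDelta != 0 by rewrite -normr_eq0 ns oner_eq0.
have nw : `|omega| = 1 by rewrite normrM normfV ns norm_expmi invr1 mul1r.
have hz : expmi xi = sqrtDelta * omega by rewrite mulrA mulfV ?mul1r.
rewrite hz in hsol.
have closed_form := sqnorm_closed_form n hU a0 b0 hs nw hsol.
split=> [_ | t1]; first exact: closed_form.
(* on the boundary of B the real number t is +-1 *)
have t2 : t ^+ 2 = 1.
  have t_real : t^* = t := xom_real a nw.
  by rewrite expr2 -{2}t_real -normCK t1 expr1n.
rewrite closed_form !zetap_unit_sq //.
by congr (_ / _); ring.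
Qed.
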